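(* Let $\mathcal G$ be a finite groupoid and $\alpha=(S_g,\alpha_g)_{g\in\mathcal G}$ a unital partial action of $\mathcal G$ on a commutative ring $S$ with $S_g=S1_g$ ($1_g$ central idempotents) and $S=\bigoplus_{z\in\mathcal G_0}S_z$. Let $\mathcal G_0=Z_1\,\dot\cup\cdots\dot\cup\,Z_r$ be the partition of $\mathcal G_0$ into the object sets of the connected components $\mathcal G_1,\dots,\mathcal G_r$ of $\mathcal G$ (where $\mathcal G_j$ is the full subgroupoid on $Z_j$), let $S_j=\bigoplus_{y\in Z_j}S_y$, let $\alpha_j=(S_g,\alpha_g)_{g\in\mathcal G_j}$ be the restricted partial action of $\mathcal G_j$ on $S_j$, and put $R=S^{\alpha_{\mathcal G}}$ and $R_j=S_j^{\alpha_j}$. Then $R\subseteq S$ is an $\alpha$-partial Galois extension if and only if $R_j\subseteq S_j$ is an $\alpha_j$-partial Galois extension for every $1\le j\le r$.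
   Context: A groupoid is a small category in which every morphism is invertible; $\mathcal G_0$ is its set of objects, identified with identity morphisms; $s(g),t(g)$ are source and target, $\mathcal G(x,y)=\{g:s(g)=x,t(g)=y\}$, $gh$ is defined iff $s(g)=t(h)$. Connected components are the full subgroupoids on the equivalence classes of $x\sim y\iff\mathcal G(x,y)\ne\emptyset$. A partial action $\alpha=(S_g,\alpha_g)_{g\in\mathcal G}$ of $\mathcal G$ on a ring $S$: for each $g$, $S_{t(g)}$ is an ideal of $S$, $S_g$ an ideal of $S_{t(g)}$, $\alpha_g:S_{g^{-1}}\to S_g$ a ring isomorphism; $\alpha_x=\mathrm{id}_{S_x}$ for $x\in\mathcal G_0$; for composable $(g,h)$, $\alpha_h^{-1}(S_{g^{-1}}\cap S_h)\subseteq S_{(gh)^{-1}}$ and $\alpha_g\alpha_h(a)=\alpha_{gh}(a)$ on that set. Unital means $S_g=S1_g$ with $1_g$ a central idempotent. For a partial action $\beta=(A_g,\beta_g)_{g\in\mathcal K}$ of a groupoid $\mathcal K$ on a ring $A$, the invariant subring is $A^{\beta}=\{a\in A:\beta_g(a1_{g^{-1}})=a1_g\ \forall g\in\mathcal K\}$. An extension $B\subseteq A$ is a $\beta$-partial Galois extension if $B=A^{\beta}$ and there exist $m\ge1$ and $a_i,b_i\in A$ ($1\le i\le m$) with $\sum_{i=1}^m a_i\beta_g(b_i1_{g^{-1}})=\delta_{z,g}1_z$ for all $z\in\mathcal K_0$, $g\in\mathcal K$, i.e. the sum equals $1_g$ when $g\in\mathcal K_0$ and $0$ when $g\notin\mathcal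 K_0$. *)

From HB Require Import structures.
From mathcomp Require Import all_boot all_order all_algebra.
Set Implicit Arguments. Unset Strict Implicit. Unset Printing Implicit Defensive.
Import GRing.Theory.
Local Open Scope ring_scope.

(* A finite groupoid: objects O, morphisms G (both finite).
   comp g h is the composite "g h" (first h, then g); it is meaningful
   only when src g = tgt h (it is a total function, unspecified otherwise). *)
Record groupoid (O G : finType) := Groupoid {
  src : G -> O;
  tgt : G -> O;
  idm : O -> G;
  comp : G -> G -> G;
  ginv : G -> G;
  src_idm : forall x, src (idm x) = x;
  tgt_idm : forall x, tgt (idm x) = x;
  src_comp : forall g h, src g = tgt h -> src (comp g h) = src h;
  tgt_comp : forall g h, src g = tgt h -> tgt (comp g h) = tgt g;
  compA : forall g h k, src g = tgt h -> src h = tgt k ->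
            comp g (comp h k) = comp (comp g h) k;
  comp_idm_r : forall g, comp g (idm (src g)) = g;
  comp_idm_l : forall g, comp (idm (tgt g)) g = g;
  src_ginv : forall g, src (ginv g) = tgt g;
  tgt_ginv : forall g, tgt (ginv g) = src g;
  comp_ginv_r : forall g, comp g (ginv g) = idm (tgt g);
  comp_ginv_l : forall g, comp (ginv g) g = idm (src g)
}.

Definition is_obj (O G : finType) (Gp : groupoid O G) (g : G) : bool :=
  [exists x : O, g == idm Gp x].

Definition in_ideal (S : comPzRingType) (u a : S) : Prop := exists c : S, a = c * u.

(* A unital partial action of Gp on the commutative ring S:
   S_g = S (one g), with one g an idempotent (central, S being commutative),
   and act g : S_{g^-1} -> S_g a ring isomorphism. *)
Record unital_partial_action (O G : finType) (Gp : groupoid O G)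
    (S : comPzRingType) := UPA {
  one : G -> S;
  act : G -> S -> S;
  one_idem : forall g, one g * one g = one g;
  one_sub_tgt : forall g, in_ideal (one (idm Gp (tgt Gp g))) (one g);
  act_into : forall g a, in_ideal (one (ginv Gp g)) a -> in_ideal (one g) (act g a);
  act_add : forall g a b, in_ideal (one (ginv Gp g)) a -> in_ideal (one (ginv Gp g)) b ->
      act g (a + b) = act g a + act g b;
  act_mul : forall g a b, in_ideal (one (ginv Gp g)) a -> in_ideal (one (ginv Gp g)) b ->
      act g (a * b) = act g a * act g b;
  act_inj : forall g a b, in_ideal (one (ginv Gp g)) a -> in_ideal (one (ginv Gp g)) b ->
      act g a = act g b -> a = b;
  act_surj : forall g b, in_ideal (one g) b ->
      exists2 a, in_ideal (one (ginv Gp g)) a & act g a = b;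
  act_idm : forall x a, in_ideal (one (idm Gp x)) a -> act (idm Gp x) a = a;
  act_comp : forall g h, src Gp g = tgt Gp h -> forall a,
      in_ideal (one (ginv Gp h)) a ->
      in_ideal (one (ginv Gp g)) (act h a) -> in_ideal (one h) (act h a) ->
      in_ideal (one (ginv Gp (comp Gp g h))) a /\
      act g (act h a) = act (comp Gp g h) a
}.

Definition direct_sum_objects (O G : finType) (Gp : groupoid O G)
    (S : comPzRingType) (al : unital_partial_action Gp S) : Prop :=
  (forall a : S, exists c : O -> S,
      (forall z, in_ideal (one al (idm Gp z)) (c z)) /\ a = \sum_(z : O) c z) /\
  (forall c : O -> S, (forall z, in_ideal (one al (idm Gp z)) (c z)) ->
      \sum_(z : O) c z = 0 -> forall z, c z = 0).

Definition invariants (O G : finType) (Gp : groupoid O G)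
    (S : comPzRingType) (al : unital_partial_action Gp S)
    (A : S -> Prop) (K : pred G) : S -> Prop :=
  fun a => A a /\ forall g, K g ->
     act al g (a * one al (ginv Gp g)) = a * one al g.

(* B ⊆ A is a partial Galois extension for the restriction of al to K
   (objects of K identified with the identities lying in K). *)
Definition partial_Galois (O G : finType) (Gp : groupoid O G)
    (S : comPzRingType) (al : unital_partial_action Gp S)
    (B A : S -> Prop) (K : pred G) : Prop :=
  (forall b, B b <-> invariants al A K b) /\
  exists (m : nat) (a b : 'I_m -> S), (0 < m)%N /\
    (forall i, A (a i) /\ A (b i)) /\
    forall g, K g ->
      \sum_(i < m) a i * act al g (b i * one al (ginv Gp g))
        = (if is_obj Gp g then one al g else 0).

Definition component (O G : finType) (Gp : groupoid O G) (x : O) : pred O :=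
  fun y => [exists g : G, (src Gp g == x) && (tgt Gp g == y)].

Definition full_sub (O G : finType) (Gp : groupoid O G) (Z : pred O) : pred G :=
  fun g => Z (src Gp g) && Z (tgt Gp g).

Definition sum_ideals (O G : finType) (Gp : groupoid O G)
    (S : comPzRingType) (al : unital_partial_action Gp S) (Z : pred O) : S -> Prop :=
  fun a => exists c : O -> S,
    (forall y, Z y -> in_ideal (one al (idm Gp y)) (c y)) /\
    a = \sum_(y : O | Z y) c y.

(** Since the ideals [S_z] form a direct sum, the idempotents [1_z] are
   pairwise orthogonal, so [e_Z = \sum_(y in Z) 1_y] is the unit of
   [S_Z = \bigoplus_(y in Z) S_y] and kills every [S_g] with [t(g) \notin Z].
   Multiplying Galois coordinates of [S] by [e_Z] gives Galois coordinates
   of [S_Z] for each component [Z]; conversely, concatenating Galois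
   coordinates of the [S_Z], one component [Z] at a time, gives coordinates
   of [S], because for a morphism [g] only the pairs of the component of [g]
   contribute to the defining sum. *)

From Pilot Require Import Defs.
From mathcomp Require Import all_boot all_order all_algebra.
Set Implicit Arguments. Unset Strict Implicit. Unset Printing Implicit Defensive.
Import GRing.Theory.
Local Open Scope ring_scope.

Section Components.
Variables (O G : finType) (Gp : groupoid O G).

Lemma component_refl x : component Gp x x.
Proof. by apply/existsP; exists (idm Gp x); rewrite src_idm tgt_idm !eqxx. Qed.

Lemma component_sym x y : component Gp x y -> component Gp y x.
Proof.
move=> /existsP [g /andP [/eqP <- /eqP <-]]; apply/existsP; exists (ginv Gp g).
by rewrite src_ginv tgt_ginv !eqxx.
Qed.

Lemma component_trans x y z :
  component Gp x y -> component Gp y z -> component Gp x z.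
Proof.
move=> /existsP [g /andP [/eqP sg /eqP tg]] /existsP [h /andP [/eqP sh /eqP th]].
apply/existsP; exists (Defs.comp Gp h g).
by rewrite src_comp ?tgt_comp ?sh ?tg // sg th !eqxx.
Qed.

Lemma component_src_tgt g : component Gp (src Gp g) (tgt Gp g).
Proof. by apply/existsP; exists g; rewrite !eqxx. Qed.

Lemma eq_component x y : component Gp x y -> component Gp x =1 component Gp y.
Proof.
move=> cxy z; apply/idP/idP; last exact: component_trans.
exact/component_trans/component_sym.
Qed.

Definition component_rep x : O := odflt x [pick y | component Gp x y].

Lemma component_repP x : component Gp x (component_rep x).
Proof. by rewrite /component_rep; case: pickP => //= _; apply: component_refl. Qed.

Lemma component_rep_eq x y : component Gp x y -> component_rep x = component_rep y.
Proof.
move=> cxy; rewrite /component_rep (eq_pick (eq_component cxy)).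
by case: pickP => //= none; move: (none y); rewrite component_refl.
Qed.

Lemma component_rep_idem x : component_rep (component_rep x) = component_rep x.
Proof. by rewrite -(component_rep_eq (component_repP x)). Qed.

End Components.

Section IdealSums.
Variables (O G : finType) (Gp : groupoid O G) (S : comPzRingType)
  (al : unital_partial_action Gp S).

Local Notation one := (Defs.one al).
Local Notation act := (Defs.act al).
Local Notation one_obj x := (one (idm Gp x)).

Lemma in_ideal_trans (u v a : S) : in_ideal u v -> in_ideal v a -> in_ideal u a.
Proof. by case=> c -> [d ->]; exists (d * c); rewrite mulrA. Qed.

Lemma in_ideal_tgt g a : in_ideal (one g) a -> in_ideal (one_obj (tgt Gp g)) a.
Proof. exact/in_ideal_trans/one_sub_tgt. Qed.

Lemma in_ideal_one_if g : in_ideal (one g) (if is_obj Gp g then one g else 0).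
Proof. by case: ifP => _; [exists 1; rewrite mul1r | exists 0; rewrite mul0r]. Qed.

Lemma sum_ideals0 (Z : pred O) : sum_ideals al Z 0.
Proof. by exists (fun _ => 0); split; [exists 0; rewrite mul0r | rewrite big1]. Qed.

Definition one_sum (Z : pred O) : S := \sum_(y | Z y) one_obj y.

Lemma sum_ideals_mul_one_sum (Z : pred O) a : sum_ideals al Z (a * one_sum Z).
Proof. by exists (fun y => a * one_obj y); split; [exists a | rewrite mulr_sumr]. Qed.

Hypothesis direct_sum : direct_sum_objects al.

Lemma one_obj_orth x y : x != y -> one_obj x * one_obj y = 0.
Proof.
move=> nxy; set p := one_obj x * one_obj y.
pose c z := if z == x then p else if z == y then - p else 0.
have c_in z : in_ideal (one_obj z) (c z).
  rewrite /c; case: eqP => [->|_]; first by exists (one_obj y); rewrite mulrC.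
  case: eqP => [->|_]; first by exists (- one_obj x); rewrite mulNr.
  by exists 0; rewrite mul0r.
have c_sum : \sum_z c z = 0.
  rewrite (bigD1 x) //= (bigD1 y) 1?eq_sym //= /c eqxx eq_sym (negbTE nxy) eqxx.
  by rewrite big1 ?addr0 ?subrr // => z /andP [/negbTE -> /negbTE ->].
by have := proj2 direct_sum c c_in c_sum x; rewrite /c eqxx.
Qed.

Lemma mul_one_sum_id (Z : pred O) g u :
  in_ideal (one g) u -> Z (tgt Gp g) -> u * one_sum Z = u.
Proof.
move=> /in_ideal_tgt [c ->] Zt; rewrite -mulrA /one_sum mulr_sumr (bigD1 (tgt Gp g)) //=.
rewrite one_idem big1 ?addr0 // => y /andP [_ nyt].
by rewrite one_obj_orth // eq_sym.
Qed.

Lemma sum_ideals_mul_eq0 (Z : pred O) g a u :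
  sum_ideals al Z a -> in_ideal (one g) u -> ~~ Z (tgt Gp g) -> a * u = 0.
Proof.
move=> [c [c_in ->]] /in_ideal_tgt [d ->] Zt; rewrite mulr_suml big1 // => y Zy.
have [k ->] := c_in y Zy; rewrite mulrCA -mulrA one_obj_orth ?mulr0 //.
by apply: contraNneq Zt => <-.
Qed.

End IdealSums.

Section GaloisCoordinates.
Variables (O G : finType) (Gp : groupoid O G) (S : comPzRingType)
  (al : unital_partial_action Gp S).

Local Notation one := (Defs.one al).
Local Notation act := (Defs.act al).

Definition galois_coords (A : S -> Prop) (K : pred G) (ps : seq (S * S)) : Prop :=
  (forall p, p \in ps -> A p.1 /\ A p.2) /\
  forall g, K g -> \sum_(p <- ps) p.1 * act g (p.2 * one (ginv Gp g))
                     = (if is_obj Gp g then one g else 0).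

(* [partial_Galois] asks for [m > 0] coordinates; prepending the pair
   [(0, 0)] to a possibly empty list of coordinates costs nothing. *)
Lemma partial_Galois_invariantsP (A : S -> Prop) (K : pred G) : A 0 ->
  partial_Galois al (invariants al A K) A K <-> exists ps, galois_coords A K ps.
Proof.
move=> A0; split.
- case=> _ [m [a [b [_ [ab_in ab_sum]]]]].
  exists [seq (a i, b i) | i <- enum 'I_m]; split.
    by move=> p /mapP [i _ ->]; apply: ab_in.
  by move=> g Kg; rewrite big_map big_enum; apply: ab_sum.
- case=> ps [ps_in ps_sum]; split=> //.
  pose qs := (0 : S, 0 : S) :: ps.
  exists (size qs), (fun i => (nth 0 qs i).1), (fun i => (nth 0 qs i).2).
  split=> //; split.
    move=> i; have : nth 0 qs i \in qs by rewrite mem_nth.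
    by rewrite in_cons => /predU1P [-> //|]; apply: ps_in.
  move=> g Kg; rewrite -(ps_sum g Kg).
  transitivity (\sum_(p <- qs) p.1 * act g (p.2 * one (ginv Gp g))).
    by rewrite [RHS](big_nth 0) big_mkord.
  by rewrite big_cons mul0r add0r.
Qed.

Hypothesis direct_sum : direct_sum_objects al.

Lemma galois_coords_restrict (Z : pred O) ps :
  galois_coords (fun _ => True) predT ps ->
  galois_coords (sum_ideals al Z) (full_sub Gp Z)
    [seq (p.1 * one_sum al Z, p.2 * one_sum al Z) | p <- ps].
Proof.
case=> _ ps_sum; split.
  by move=> q /mapP [p _ ->]; split; apply: sum_ideals_mul_one_sum.
move=> g /andP [Zs Zt]; rewrite big_map.
rewrite -(mul_one_sum_id direct_sum (in_ideal_one_if al g) Zt) -(ps_sum g erefl).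
rewrite mulr_suml; apply: eq_bigr => p _ /=.
have Zt' : Z (tgt Gp (ginv Gp g)) by rewrite tgt_ginv.
have one_ginv : in_ideal (one (ginv Gp g)) (one (ginv Gp g)) by exists 1; rewrite mul1r.
rewrite -[p.2 * _ * _]mulrA [one_sum _ _ * _]mulrC.
by rewrite (mul_one_sum_id direct_sum one_ginv Zt') mulrAC.
Qed.

Lemma galois_coords_glue (ps : O -> seq (S * S)) :
  (forall x, galois_coords (sum_ideals al (component Gp x))
                           (full_sub Gp (component Gp x)) (ps x)) ->
  galois_coords (fun _ => True) predT
    (flatten [seq ps x | x <- index_enum O & component_rep Gp x == x]).
Proof.
move=> ps_coords; split=> // g _; rewrite big_flatten big_map big_filter.
set x0 := component_rep Gp (tgt Gp g).
have x0t : component Gp x0 (tgt Gp g) by apply/component_sym/component_repP.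
have x0s : component Gp x0 (src Gp g).
  exact/(component_trans x0t)/component_sym/component_src_tgt.
rewrite (bigD1 x0) /=; last by rewrite component_rep_idem.
rewrite (proj2 (ps_coords x0)) /full_sub ?x0s ?x0t // big1 ?addr0 //.
move=> x /andP [/eqP rep_x nx0]; apply: big1_seq => p /andP [_ p_in].
apply: (sum_ideals_mul_eq0 direct_sum (proj1 (proj1 (ps_coords x) p p_in))).
  by apply: act_into; exists p.2.
by apply: contra nx0 => xt; rewrite -rep_x /x0 (component_rep_eq xt).
Qed.

End GaloisCoordinates.

Theorem proposition2p11 (O G : finType) (Gp : groupoid O G) (S : comPzRingType)
    (al : unital_partial_action Gp S) :
  direct_sum_objects al ->
  partial_Galois al (invariants al (fun _ => True) predT) (fun _ => True) predT <->
  (forall x : O,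
     partial_Galois al
       (invariants al (sum_ideals al (component Gp x)) (full_sub Gp (component Gp x)))
       (sum_ideals al (component Gp x)) (full_sub Gp (component Gp x))).
Proof.
move=> direct_sum.
have galoisP x := partial_Galois_invariantsP al (full_sub Gp (component Gp x))
  (sum_ideals0 al (component Gp x)).
have galoisT := partial_Galois_invariantsP al predT (A := fun _ => True) I.
apply: (iff_trans galoisT); split.
- case=> ps ps_coords x; apply/galoisP.
  exact: ex_intro (galois_coords_restrict direct_sum (component Gp x) ps_coords).
- move=> comp_galois.
  have /fin_all_exists [ps ps_coords] x := iffLR (galoisP x) (comp_galois x).
  exact: ex_intro (galois_coords_glue direct_sum ps_coords).
Qed.
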